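(* Let $\mathcal{M}$ be a separable metric space, $f:\mathcal{M}\to\mathcal{M}$ continuous, and $\mathcal{X}\subseteq\mathcal{M}$ forward invariant under $f$. For any $\xi\in\mathcal{X}$, if the trajectory through $\xi$ is forward precompact in $\mathcal{X}$, then $\omega_{\mathcal{X}}(\xi)$ is nonempty. Moreover, if $\mathcal{M}=\mathbb{R}^n$, $f(x)=Ax$ on $\mathcal{X}$ for some $A\in\mathbb{R}^{n\times n}$, and $\mathcal{X}$ is closed in $\mathbb{R}^n$, then conversely, $\omega_{\mathcal{X}}(\xi)\neq\emptyset$ implies that the trajectory through $\xi$ is forward precompact in $\mathcal{X}$.
   Context: The forward orbit of $\xi$ is $\{f^k(\xi)\mid k\in\mathbb{N}\}$; the trajectory through $\xi$ is forward precompact in $\mathcal{X}$ if the closure of its forward orbit in $\mathcal{X}$ is compact. $\omega_{\mathcal{X}}(\xi)$ is the set of $x\in\mathcal{X}$ such that $f^{k_j}(\xi)\to x$ for some sequence of indices $k_j\to\infty$. *)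

From HB Require Import structures.
From mathcomp Require Import all_boot all_order all_algebra.
From mathcomp Require Import all_classical all_reals all_analysis.
Set Implicit Arguments. Unset Strict Implicit. Unset Printing Implicit Defensive.
Import Order.TTheory GRing.Theory Num.Theory.
Import numFieldNormedType.Exports.
Local Open Scope classical_set_scope.
Local Open Scope ring_scope.

Definition separable_space (T : topologicalType) : Prop :=
  exists D : set T, countable D /\ closure D = setT.

Definition forward_invariant (T : Type) (f : T -> T) (X : set T) : Prop :=
  f @` X `<=` X.

Definition forward_orbit (T : Type) (f : T -> T) (xi : T) : set T :=
  [set iter k f xi | k in setT].

Definition closure_in (T : topologicalType) (X A : set T) : set T :=
  X `&` closure A.

(* the trajectory through xi is forward precompact in X: the closure in X of
   its forward orbit is compact (compactness of a subset of X in the subspace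
   topology coincides with compactness in the ambient space). *)
Definition forward_precompact_in (T : topologicalType) (X : set T)
  (f : T -> T) (xi : T) : Prop :=
  compact (closure_in X (forward_orbit f xi)).

Definition omega_limit_in (T : topologicalType) (X : set T)
  (f : T -> T) (xi : T) : set T :=
  [set x | X x /\ exists k : nat -> nat,
      k @ \oo --> \oo /\ (fun j => iter (k j) f xi) @ \oo --> x].

From HB Require Import structures.
From mathcomp Require Import all_boot all_order all_algebra.
From mathcomp Require Import all_classical all_reals all_analysis.
From mathcomp Require Import complex ring.
Import Order.TTheory GRing.Theory Num.Theory.
Import numFieldNormedType.Exports.
Local Open Scope classical_set_scope.
Local Open Scope ring_scope.

Set Implicit Arguments.
Unset Strict Implicit.
Unset Printing Implicit Defensive.

(* The first part is compactness: the iterates stay in the compact set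
   X ∩ cl(orbit), so the sequence of iterates has a cluster point there, and in
   a metric space a cluster point of a sequence is the limit of a subsequence.

   For the converse, a point of the omega-limit set bounds infinitely many
   iterates A^k ξ, and for a linear map this already bounds the whole orbit.
   Over ℂ, decompose ξ along the generalized eigenspaces of A using Bezout
   identities; the projections are polynomials in A, so each component is
   still bounded at infinitely many times. On an eigenvalue λ with |λ| < 1 every
   orbit is bounded; for |λ| > 1 a nonzero component grows exponentially, and
   for |λ| = 1 a nontrivial Jordan chain grows linearly, so in the last two
   cases the component is 0 or an eigenvector. Finally a closed bounded set of
   ℝ^n is compact. *)

Lemma iter_forward_invariant (T : Type) (f : T -> T) X x k :
  forward_invariant f X -> X x -> X (iter k f x).
Proof.
by move=> fX Xx; elim: k => //= k IH; apply: fX; exists (iter k f x).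
Qed.

Lemma cluster_subseq_cvg (R : realType) (M : pseudoMetricType R)
    (u : nat -> M) x :
  cluster (u @ \oo) x ->
  exists k : nat -> nat, k @ \oo --> \oo /\ u \o k @ \oo --> x.
Proof.
move=> ux.
have near_x j : exists m, (j <= m)%N /\ ball x j.+1%:R^-1 (u m).
  case: (ux [set u m | m in [set m | (j <= m)%N]] (ball x j.+1%:R^-1)).
  - by exists j => // m /= jm; exists m.
  - by apply: nbhsx_ballx; rewrite invr_gt0.
  - by move=> _ [[m jm <-] xum]; exists m.
have [k kP] := choice near_x.
exists k; split.
  move=> P [N _ NP]; exists N => // j Nj; apply: NP.
  exact: leq_trans Nj (kP j).1.
apply/cvg_ballP => e e0; near=> j; apply: le_ball (kP j).2.
rewrite invf_ple ?posrE ?ltr0Sn //; apply: (@le_trans _ _ j%:R); last first.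
  by rewrite ler_nat.
by near: j; exact: nbhs_infty_ger.
Unshelve. all: by end_near.
Qed.

Lemma omega_limit_in_neq0 (R : realType) (M : pseudoMetricType R) (f : M -> M)
    X xi :
  forward_invariant f X -> X xi -> forward_precompact_in X f xi ->
  omega_limit_in X f xi !=set0.
Proof.
move=> fX Xxi cpt.
have orbit_in k : closure_in X (forward_orbit f xi) (iter k f xi).
  by split; [exact: iter_forward_invariant | apply: subset_closure; exists k].
have [x [[Xx _] /cluster_subseq_cvg[k kx]]] :
    closure_in X (forward_orbit f xi) `&`
    cluster ((fun k => iter k f xi) @ \oo) !=set0.
  by apply: cpt; exists 0%N => // m _; exact: orbit_in.
by exists x; split => //; exists k.
Qed.

Lemma eigenvector_exp (R : comPzRingType) n (A : 'M[R]_n) (l : R)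
    (v : 'cV[R]_n) :
  A *m v = l *: v -> forall k, A ^+ k *m v = l ^+ k *: v.
Proof.
move=> Av; elim=> [|k IH]; first by rewrite !expr0 mul1mx scale1r.
by rewrite exprSr -mulmxE -mulmxA Av -scalemxAr IH scalerA -exprS.
Qed.

Lemma mulmx_sub_scalar (R : pzRingType) n (A : 'M[R]_n) (l : R)
    (w : 'cV[R]_n) :
  A *m w = l *: w + (A - l%:M) *m w.
Proof. by rewrite mulmxBl mul_scalar_mx addrC subrK. Qed.

Lemma comm_sub_scalar (R : comPzRingType) n (A : 'M[R]_n) (l : R) :
  GRing.comm (A - l%:M) A.
Proof. by rewrite /GRing.comm mulrBl mulrBr -!mulmxE scalar_mxC. Qed.

Lemma comm_horner_mx (R : comNzRingType) n (A : 'M[R]_n.+1)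
    (p : {poly R}) :
  GRing.comm (horner_mx A p) A.
Proof. by have := comm_horner_mx2 A p 'X; rewrite horner_mx_X. Qed.

Definition mx_bounded_by (K : numDomainType) m n (B : K) (M : 'M[K]_(m, n)) :=
  forall i j, `|M i j| <= B.

Definition bounded_orbit (K : numDomainType) n (A : 'M[K]_n) (v : 'cV[K]_n) :=
  exists B, forall k, mx_bounded_by B (A ^+ k *m v).

Definition frequently_bounded_orbit (K : numDomainType) n (A : 'M[K]_n)
    (v : 'cV[K]_n) :=
  exists B, forall N, exists2 k, (N <= k)%N & mx_bounded_by B (A ^+ k *m v).

Lemma bernoulli_ineq (K : numDomainType) (x : K) k :
  0 <= x -> 1 + k%:R * x <= (1 + x) ^+ k.
Proof.
move=> x0; elim: k => [|k IH]; first by rewrite mul0r addr0 expr0.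
rewrite exprS; apply: le_trans (ler_wpM2l _ IH); last by rewrite addr_ge0.
have -> : (1 + x) * (1 + k%:R * x) = 1 + k.+1%:R * x + k%:R * x * x.
  by rewrite -natr1; ring.
by rewrite lerDl !mulr_ge0.
Qed.

Section EntrywiseBounds.
Variables (K : numDomainType) (n : nat).
Implicit Types (A M : 'M[K]_n.+1) (v w : 'cV[K]_n.+1) (B : K).

Lemma mx_bounded_by_ge0 B v : mx_bounded_by B v -> 0 <= B.
Proof. by move=> vB; apply: le_trans (vB ord0 ord0). Qed.

Lemma mx_bounded_by_sum v : mx_bounded_by (\sum_i `|v i 0|) v.
Proof. by move=> i j; rewrite (ord1 j) (bigD1 i) //= lerDl sumr_ge0. Qed.

Lemma mx_bounded_by_mulmx M v B :
  mx_bounded_by B v -> mx_bounded_by ((\sum_i \sum_j `|M i j|) * B) (M *m v).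
Proof.
move=> vB i j; have B0 := mx_bounded_by_ge0 vB.
rewrite mxE; apply: le_trans (ler_norm_sum _ _ _) _.
apply: (@le_trans _ _ (\sum_l `|M i l| * B)).
  by apply: ler_sum => l _; rewrite normrM ler_wpM2l.
rewrite -mulr_suml ler_wpM2r // [leRHS](bigD1 i) //= lerDl.
by apply: sumr_ge0 => ? _; apply: sumr_ge0.
Qed.

Lemma bounded_orbit0 A : bounded_orbit A 0.
Proof. by exists 0 => k i j; rewrite mulmx0 mxE normr0. Qed.

Lemma bounded_orbitD A v w :
  bounded_orbit A v -> bounded_orbit A w -> bounded_orbit A (v + w).
Proof.
move=> [B1 vB] [B2 wB]; exists (B1 + B2) => k i j.
rewrite mulmxDr mxE; apply: le_trans (ler_normD _ _) _.
exact: lerD (vB k i j) (wB k i j).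
Qed.

Lemma frequently_bounded_orbit_mulmx A M v : GRing.comm M A ->
  frequently_bounded_orbit A v -> frequently_bounded_orbit A (M *m v).
Proof.
move=> cMA [B vB]; exists ((\sum_i \sum_j `|M i j|) * B) => N.
have [k Nk kB] := vB N; exists k => //.
rewrite mulmxA mulmxE -(commrX k cMA) -mulmxE -mulmxA.
exact: mx_bounded_by_mulmx.
Qed.

End EntrywiseBounds.

Lemma linear_growth_not_frequently_bounded (K : numFieldType) n
    (A : 'M[K]_n) (v : 'cV[K]_n) i (c D : K) :
  Num.archimedean_axiom K -> 0 < c ->
  (forall k, k%:R * c <= `|(A ^+ k *m v) i 0| + D) ->
  ~ frequently_bounded_orbit A v.
Proof.
move=> archi c0 grow [B vB].
have [N ltN] := archi ((B + D) / c).
have [k Nk /(_ i 0) kB] := vB N.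
have kBD : k%:R <= (B + D) / c.
  by rewrite ler_pdivlMr // (le_trans (grow k)) // lerD2r.
rewrite ger0_norm ?(le_trans (ler0n _ k)) // in ltN.
by move: (le_lt_trans kBD ltN); rewrite ltr_nat ltnNge Nk.
Qed.

Section GeneralizedEigenvectors.
Variables (C : numClosedFieldType) (n : nat).
Hypothesis C_archi : Num.archimedean_axiom C.
Implicit Types (A : 'M[C]_n.+1) (u v w : 'cV[C]_n.+1) (l : C).

Lemma eigen_bounded_orbit A l w :
  A *m w = l *: w -> `|l| <= 1 -> bounded_orbit A w.
Proof.
move=> Aw l1; exists (\sum_i `|w i 0|) => k i j.
rewrite (eigenvector_exp Aw) mxE normrM normrX.
by apply: le_trans (mx_bounded_by_sum w i j); rewrite ler_piMl ?exprn_ile1.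
Qed.

Lemma eigen_frequently_bounded_eq0 A l w : A *m w = l *: w -> 1 < `|l| ->
  frequently_bounded_orbit A w -> w = 0.
Proof.
move=> Aw l1 wB; apply/matrixP => i j; rewrite (ord1 j) mxE.
apply/eqP/negPn/negP => wi0.
apply: (linear_growth_not_frequently_bounded (i := i)
  (c := (`|l| - 1) * `|w i 0|) (D := 0) C_archi _ _ wB).
  by rewrite mulr_gt0 ?subr_gt0 ?normr_gt0.
move=> k; rewrite addr0 (eigenvector_exp Aw) mxE normrM normrX mulrA.
rewrite ler_wpM2r //.
have l10 : 0 <= `|l| - 1 by rewrite subr_ge0 ltW.
have := bernoulli_ineq k l10; rewrite [1 + (_ - 1)]addrC subrK.
by apply: le_trans; rewrite lerDr.
Qed.

Lemma jordan_chain_not_frequently_bounded A l u w :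
  `|l| = 1 -> A *m u = l *: u -> A *m w = l *: w + u -> u != 0 ->
  ~ frequently_bounded_orbit A w.
Proof.
move=> l1 Au Aw u0.
have [i ui0] : exists i, u i 0 != 0.
  apply/existsP; apply: contraNT u0 => /existsPn u0.
  by apply/eqP/matrixP => i j; rewrite (ord1 j) mxE; apply/eqP/negPn.
(* Scaling by l avoids the exponent k - 1 of A^k w = l^k w + k l^(k-1) u. *)
have orbit_w k : l *: (A ^+ k *m w) = l ^+ k.+1 *: w + (k%:R * l ^+ k) *: u.
  elim: k => [|k IH]; first by rewrite expr0 mul1mx expr1 mul0r scale0r addr0.
  rewrite exprSr -mulmxE -mulmxA Aw mulmxDr -scalemxAr (eigenvector_exp Au).
  rewrite scalerDr IH scalerDr !scalerA -addrA -scalerDl -exprS.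
  by congr (_ + _); congr (_ *: _); rewrite exprS -natr1; ring.
apply: (linear_growth_not_frequently_bounded (i := i) (c := `|u i 0|)
  (D := `|w i 0|) C_archi); first by rewrite normr_gt0.
move=> k; have := congr1 (fun v => v i 0) (orbit_w k).
rewrite [LHS]mxE [RHS]mxE [X in X + _]mxE [X in _ + X]mxE => orbit_wi.
have -> : k%:R * `|u i 0| = `|l * (A ^+ k *m w) i 0 - l ^+ k.+1 * w i 0|.
  rewrite orbit_wi addrAC subrr add0r.
  by rewrite !normrM normrX l1 expr1n mulr1 normr_nat.
apply: le_trans (ler_normB _ _) _.
by rewrite !normrM normrX l1 expr1n !mul1r.
Qed.

Lemma geigen_lt1_bounded_orbit A l m w : `|l| < 1 ->
  (A - l%:M) ^+ m *m w = 0 -> bounded_orbit A w.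
Proof.
move=> l1; elim: m w => [|m IH] w.
  by rewrite expr0 mul1mx => ->; exact: bounded_orbit0.
rewrite exprSr -mulmxE -mulmxA => /IH[Bu uB].
have Bu0 : 0 <= Bu := mx_bounded_by_ge0 (uB 0%N).
have d0 : 0 < 1 - `|l| by rewrite subr_gt0.
pose B := \sum_i `|w i 0| + Bu / (1 - `|l|).
have Bstep : `|l| * B + Bu <= B.
  rewrite [leRHS](_ : B = `|l| * B + (1 - `|l|) * B); last by ring.
  rewrite lerD2l mulrDr mulrCA divff ?gt_eqF // mulr1 lerDr.
  by apply: mulr_ge0; [exact: ltW | apply: sumr_ge0].
exists B => k; elim: k => [|k IHk] i j.
  rewrite expr0 mul1mx; apply: le_trans (mx_bounded_by_sum w i j) _.
  by rewrite lerDl divr_ge0 // ltW.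
rewrite exprSr -mulmxE -mulmxA (mulmx_sub_scalar A l) mulmxDr -scalemxAr.
rewrite mxE [X in `|X + _|]mxE; apply: le_trans (ler_normD _ _) _.
rewrite normrM; apply: le_trans Bstep.
exact: lerD (ler_wpM2l (normr_ge0 l) (IHk i j)) (uB k i j).
Qed.

Lemma geigen_gt1_eq0 A l m w : 1 < `|l| ->
  (A - l%:M) ^+ m *m w = 0 -> frequently_bounded_orbit A w -> w = 0.
Proof.
move=> l1; elim: m w => [|m IH] w; first by rewrite expr0 mul1mx.
rewrite exprSr -mulmxE -mulmxA => /IH u0 wB.
have uB := frequently_bounded_orbit_mulmx (comm_sub_scalar A l) wB.
apply: (eigen_frequently_bounded_eq0 (l := l)) wB => //.
by rewrite (mulmx_sub_scalar A l) u0 // addr0.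
Qed.

Lemma geigen_eq1_eigen A l m w : `|l| = 1 ->
  (A - l%:M) ^+ m *m w = 0 -> frequently_bounded_orbit A w -> A *m w = l *: w.
Proof.
move=> l1; elim: m w => [|m IH] w.
  by rewrite expr0 mul1mx => ->; rewrite mulmx0 scaler0.
rewrite exprSr -mulmxE -mulmxA => /IH Au wB.
have {}Au := Au (frequently_bounded_orbit_mulmx (comm_sub_scalar A l) wB).
have [u0|u_neq0] := eqVneq ((A - l%:M) *m w) 0.
  by rewrite (mulmx_sub_scalar A l) u0 addr0.
by case: (jordan_chain_not_frequently_bounded l1 Au (mulmx_sub_scalar A l w)
  u_neq0).
Qed.

Lemma geigen_bounded_orbit A l m w : (A - l%:M) ^+ m *m w = 0 ->
  frequently_bounded_orbit A w -> bounded_orbit A w.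
Proof.
move=> Nw wB; case: (real_ltgtP (normr_real l) (real1 C)) => l1.
- exact: geigen_lt1_bounded_orbit Nw.
- by rewrite (geigen_gt1_eq0 l1 Nw wB); exact: bounded_orbit0.
- by apply: eigen_bounded_orbit (geigen_eq1_eigen l1 Nw wB) _; rewrite l1.
Qed.

Definition orbits_bounded_on_ker A (p : {poly C}) := forall v,
  horner_mx A p *m v = 0 -> frequently_bounded_orbit A v -> bounded_orbit A v.

Lemma orbits_bounded_on_kerM A p q : coprimep p q ->
  orbits_bounded_on_ker A p -> orbits_bounded_on_ker A q ->
  orbits_bounded_on_ker A (p * q).
Proof.
move=> /Bezout_eq1_coprimepP[[a b] /= Bezout] pB qB v pqv vB.
have horner_mulmx r r' :
    horner_mx A (r * r') *m v = horner_mx A r *m (horner_mx A r' *m v).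
  by rewrite rmorphM mulmxA.
have -> : v = horner_mx A (a * p) *m v + horner_mx A (b * q) *m v.
  by rewrite -mulmxDl -rmorphD Bezout rmorph1 mul1mx.
apply: bounded_orbitD.
- apply: qB; last exact: frequently_bounded_orbit_mulmx (comm_horner_mx _ _) vB.
  by rewrite -horner_mulmx mulrCA (mulrC q) horner_mulmx pqv mulmx0.
- apply: pB; last exact: frequently_bounded_orbit_mulmx (comm_horner_mx _ _) vB.
  by rewrite -horner_mulmx mulrCA horner_mulmx pqv mulmx0.
Qed.

Lemma orbits_bounded_on_ker_XsubC_exp A l m :
  orbits_bounded_on_ker A (('X - l%:P) ^+ m).
Proof.
move=> v; rewrite rmorphXn rmorphB /= horner_mx_X horner_mx_C.
exact: geigen_bounded_orbit.
Qed.

Lemma orbits_bounded_on_ker_neq0 A p : p != 0 -> orbits_bounded_on_ker A p.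
Proof.
have [s] := ubnP (size p); elim: s p => // s IH p /ltnSE sp p_neq0.
have [/eqP/size_poly1P[c c_neq0 ->] | /closed_rootP[l pl]] :=
  eqVneq (size p) 1.
  move=> v; rewrite horner_mx_C mul_scalar_mx => /eqP.
  by rewrite scaler_eq0 (negPf c_neq0) => /eqP -> _; exact: bounded_orbit0.
have [m [q ql Ep]] := multiplicity_XsubC p l; rewrite p_neq0 /= in ql.
have q_neq0 : q != 0 by apply: contraNneq p_neq0 => q0; rewrite Ep q0 mul0r.
have m_gt0 : (0 < m)%N.
  by case: m Ep => // Ep; move: pl; rewrite Ep expr0 mulr1 (negPf ql).
have sq : (size q < s)%N.
  apply: leq_trans sp; rewrite Ep size_Mmonic ?monic_exp ?monicXsubC //.
  by rewrite size_exp_XsubC addnS /= -[X in (X < _)%N]addn0 ltn_add2l.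
rewrite Ep; apply: orbits_bounded_on_kerM.
- by apply: coprimep_expr; rewrite coprimep_XsubC.
- exact: IH.
- exact: orbits_bounded_on_ker_XsubC_exp.
Qed.

Lemma frequently_bounded_orbit_bounded A v :
  frequently_bounded_orbit A v -> bounded_orbit A v.
Proof.
apply: (orbits_bounded_on_ker_neq0 (monic_neq0 (char_poly_monic A))).
by rewrite Cayley_Hamilton mul0mx.
Qed.

End GeneralizedEigenvectors.

Section ComplexNorm.
Variable R : rcfType.
Local Open Scope complex_scope.

Lemma normc_real (x : R) : `|x%:C| = `|x|%:C.
Proof. by rewrite normc_def /= expr0n addr0 sqrtr_sqr. Qed.

End ComplexNorm.

Section Complexification.
Variable R : realType.
Local Open Scope complex_scope.
Local Notation toC := (map_mx (real_complex R)).

Lemma complex_archimedean : Num.archimedean_axiom R[i].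
Proof.
move=> x; rewrite normc_def.
have := archi_boundP (sqrtr_ge0 (complex.Re x ^+ 2 + complex.Im x ^+ 2)).
set N := Num.Def.archi_bound _ => ltN; exists N.
by rewrite -(rmorph_nat (real_complex R)) ltcR.
Qed.

Lemma real_frequently_bounded_orbit_bounded n (A : 'M[R]_n) (v : 'cV[R]_n) :
  frequently_bounded_orbit A v -> bounded_orbit A v.
Proof.
case: n A v => [|n] A v [B vB]; first by exists 0 => k [].
have toC_orbit k : toC A ^+ k *m toC v = toC (A ^+ k *m v).
  by rewrite map_mxM -rmorphXn.
have toC_entry (M : 'cV[R]_n.+1) i j : `|toC M i j| = `|M i j|%:C.
  by rewrite mxE normc_real.
have [B' vB'] : bounded_orbit (toC A) (toC v).
  apply: (frequently_bounded_orbit_bounded complex_archimedean).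
  exists B%:C => N; have [k Nk kB] := vB N; exists k => // i j.
  by rewrite toC_orbit toC_entry lecR.
exists (complex.Re B') => k i j.
by have := vB' k i j; rewrite toC_orbit toC_entry lecE => /andP[].
Qed.

End Complexification.

Lemma mx_bounded_by_normr (R : realDomainType) m n B (M : 'M[R]_(m, n)) :
  0 <= B -> mx_bounded_by B M <-> `|M| <= B.
Proof.
move=> B0; rewrite -[`|M|]/(mx_norm M) mx_normrE; split => [MB | + i j].
  by apply: bigmax_le => // ij _; exact: MB.
apply: le_trans.
exact: (le_bigmax _ (fun ij : 'I_m * 'I_n => `|M ij.1 ij.2|) (i, j)).
Qed.

Lemma ler_mx_normr (R : realDomainType) m n (M : 'M[R]_(m, n)) i j :
  `|M i j| <= `|M|.
Proof. exact: (mx_bounded_by_normr _ (normr_ge0 M)).2. Qed.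

Lemma mx_normT (R : realDomainType) m n (M : 'M[R]_(m, n)) : `|M^T| = `|M|.
Proof.
apply/le_anti/andP; split.
  apply/(mx_bounded_by_normr _ (normr_ge0 M)) => i j.
  by rewrite mxE ler_mx_normr.
apply/(mx_bounded_by_normr _ (normr_ge0 M^T)) => i j.
by have := ler_mx_normr M^T j i; rewrite mxE.
Qed.

Lemma trmx_continuous (K : numFieldType) m n : continuous (@trmx K m n).
Proof.
move=> M s /= /nbhs_ballP[e e0 es]; apply/nbhs_ballP; exists e => //= N [_ MN].
by apply: es; split => // i j; rewrite !mxE; exact: MN.
Qed.

Lemma bounded_closed_compact_cV (R : realType) n (A : set 'cV[R]_n) :
  bounded_set A -> closed A -> compact A.
Proof.
move=> [B [Breal AB]] Acl.
have -> : A = [set r^T | r in [set r : 'rV[R]_n | A r^T]].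
  apply/seteqP; split => [v Av | _ [r Ar <-]] //.
  by exists v^T; rewrite /= trmxK.
apply: continuous_compact.
  by apply: continuous_subspaceT => r; exact: trmx_continuous.
apply: bounded_closed_compact.
  by exists B; split => // M BM r Ar; rewrite /= -mx_normT; exact: AB.
by apply: preimage_closed Acl => r _; exact: trmx_continuous.
Qed.

Lemma iter_mulmx (K : pzRingType) n (f : 'cV[K]_n -> 'cV[K]_n)
    (A : 'M[K]_n) X x k :
  forward_invariant f X -> (forall y, X y -> f y = A *m y) -> X x ->
  iter k f x = A ^+ k *m x.
Proof.
move=> fX fA Xx; elim: k => [|k IH] /=; first by rewrite expr0 mul1mx.
rewrite fA; last exact: iter_forward_invariant.
by rewrite IH mulmxA exprS mulmxE.
Qed.

Section LinearTrajectories.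
Variables (R : realType) (n : nat) (f : 'cV[R]_n -> 'cV[R]_n) (A : 'M[R]_n).
Variables (X : set 'cV[R]_n) (xi : 'cV[R]_n).
Hypotheses (fX : forward_invariant f X) (fA : forall x, X x -> f x = A *m x).
Hypothesis Xxi : X xi.

Lemma omega_limit_frequently_bounded x :
  omega_limit_in X f xi x -> frequently_bounded_orbit A xi.
Proof.
move=> [_ [k [k_oo kx]]]; exists (`|x| + 1) => N.
have kN : \forall j \near \oo, (N <= k j)%N := k_oo _ (nbhs_infty_ge N).
have near_x : \forall j \near \oo, `|x - iter (k j) f xi| < 1.
  by move/cvgrPdist_lt : kx; apply.
have [j [Nj xkj]] := filter_ex (filterI kN near_x).
exists (k j) => //; rewrite -(iter_mulmx _ fX fA Xxi).
apply/mx_bounded_by_normr; first by rewrite addr_ge0.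
rewrite -[iter _ _ _](subKr x); apply: le_trans (ler_normB _ _) _.
by rewrite lerD2l ltW.
Qed.

Lemma bounded_orbit_precompact : closed X ->
  bounded_orbit A xi -> forward_precompact_in X f xi.
Proof.
move=> Xcl [B orbitB].
pose ball := closed_ball_ Num.Def.normr (0 : 'cV[R]_n) `|B|.
have orbit_ball : forward_orbit f xi `<=` ball.
  move=> _ [k _ <-]; rewrite /ball /closed_ball_ /= sub0r normrN.
  rewrite (iter_mulmx _ fX fA Xxi); apply/mx_bounded_by_normr => // i j.
  exact: le_trans (orbitB k i j) (ler_norm B).
have closure_ball : closure_in X (forward_orbit f xi) `<=` ball.
  have ball_closed : closed ball by exact: closed_closed_ball_.
  by move=> v [_ /(closureS orbit_ball)]; rewrite -(closure_id ball).1.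
apply: bounded_closed_compact_cV; last exact: closedI Xcl (@closed_closure _ _).
exists `|B|; split => // M BM v /closure_ball.
rewrite /ball /closed_ball_ /= sub0r normrN => vB.
exact: le_trans vB (ltW BM).
Qed.

End LinearTrajectories.

Theorem lemma7 (R : realType) :
  (forall (M : pseudoMetricType R) (f : M -> M) (X : set M) (xi : M),
      hausdorff_space M -> separable_space M ->
      continuous f -> forward_invariant f X -> X xi ->
      forward_precompact_in X f xi -> omega_limit_in X f xi !=set0)
  /\
  (forall (n : nat) (f : 'cV[R]_n -> 'cV[R]_n) (A : 'M[R]_n)
          (X : set 'cV[R]_n) (xi : 'cV[R]_n),
      continuous f -> forward_invariant f X -> X xi ->
      (forall x, X x -> f x = A *m x) -> closed X ->
      omega_limit_in X f xi !=set0 -> forward_precompact_in X f xi).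
Proof.
split.
- by move=> M f X xi _ _ _; exact: omega_limit_in_neq0.
- move=> n f A X xi _ fX Xxi fA Xcl [x omega_x].
  apply: (bounded_orbit_precompact fX fA Xxi Xcl).
  apply: real_frequently_bounded_orbit_bounded.
  exact: (omega_limit_frequently_bounded fX fA Xxi omega_x).
Qed.
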